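(* Let $\alpha_1=\sqrt{-106+34\sqrt{19}}$, $\alpha_2=-10+10\sqrt{19}$, $\alpha_3=16-16\sqrt{19}$, $\alpha_4=-13+3\sqrt{19}$, $\alpha_5=\sqrt{-77798+1162\sqrt{4691}}$, $\alpha_6=-\frac{354}{5}+\frac{6\sqrt{4691}}{5}$, $\alpha_7=-\frac{2183}{35}+\frac{27}{35}\sqrt{4691}$. Each of the following systems has an isochronous center at the origin $O$ with zero Urabe function (in systems with $\pm,\mp$, upper signs throughout or lower signs throughout): (i) $\dot x=-y+(-2+2\sqrt{19})x^2y+x^2-(-2+2\sqrt{19})x^4$, $\dot y=x\pm\alpha_1y^2-2xy\mp\frac{\alpha_1}{2}x^2+\alpha_2xy^2\mp2\alpha_1x^2y+\alpha_4x^3+\alpha_3x^3y\pm4\alpha_1x^4$; (ii) for every $a\in\mathbb R$: $\dot x=-y+axy+\frac{15}{8}a^2x^2y+x^2-ax^3-\frac{15}{8}a^2x^4$, $\dot y=x-\frac a2y^2-2xy+\frac{3a}{4}x^2+\frac{15}{4}a^2xy^2+3ax^2y+2x^3-\frac{15}{4}a^2x^3y-\frac{5a}{2}x^4$; (iii) $\dot x=-y\mp\frac{2}{35}\alpha_5xy+\alpha_6x^2y+x^2\pm\frac2{35}\alpha_5x^3-\alpha_6x^4$, $\dot y=x\pm\frac{\alpha_5}{35}y^2-2xy\mp\frac3{70}\alpha_5x^2+5\alpha_6xy^2\mp\frac6{35}\alpha_5x^2y+\alpha_7x^3-8\alpha_6x^3y\pm\frac{38}{35}\alpha_5x^4$.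
   Context: For a real planar polynomial system $\dot x=-y+A(x,y)$, $\dot y=x+B(x,y)$, with $A,B$ polynomials having no terms of degree $<2$, the origin $O$ is an isochronous center if there is a punctured neighborhood of $O$ in which every orbit is a closed orbit surrounding $O$ and all these orbits have the same period. Zero Urabe function: write the system as $\dot x=p_0(x)+p_1(x)y$, $\dot y=q_0(x)+q_1(x)y+q_2(x)y^2$ ($p_0(0)=q_0(0)=0$, $p_1(0)\ne0$), where it holds that $-\frac{p_1'p_0}{p_1}+q_1+p_0'-\frac{2q_2p_0}{p_1}\equiv0$. Put $f=-\frac{q_2+p_1'}{p_1}$, $g=-\frac{q_2p_0^2}{p_1}+q_1p_0-p_1q_0$ (the change $z=p_0+p_1y$ gives $\dot x=z$, $\dot z=-g(x)-f(x)z^2$), $F(x)=\int_0^xf$, and $\xi$ near $0$ by $\frac12\xi(x)^2=\int_0^xg(s)e^{2F(s)}ds$, $x\xi(x)>0$ for $x\ne0$. The Urabe function of an isochronous center is the odd analytic $h$ with $\frac{\xi(x)}{1+h(\xi(x))}=g(x)e^{F(x)}$; ''zero Urabe function'' means $h\equiv0$, i.e. $\xi(x)=g(x)e^{F(x)}$ near $0$. *)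

From Stdlib Require Import Reals Lra ClassicalEpsilon.
Open Scope R_scope.

(* Definite Riemann integral  \int_a^b f  (chosen via epsilon; it is the
   value of RiemannInt for any integrability proof, when f is integrable). *)
Definition Rint (f : R -> R) (a b : R) : R :=
  epsilon (inhabits 0)
    (fun v => exists pr : Riemann_integrable f a b, RiemannInt pr = v).

Definition is_solution (P Q : R -> R -> R) (x y : R -> R) : Prop :=
  forall t, derivable_pt_lim x t (P (x t) (y t)) /\
            derivable_pt_lim y t (Q (x t) (y t)).

Definition closed_orbit_of_period (x y : R -> R) (T : R) : Prop :=
  0 < T /\
  (forall t, x (t + T) = x t /\ y (t + T) = y t) /\
  (forall s, 0 < s < T -> ~ (x s = x 0 /\ y s = y 0)).

(* The orbit surrounds the origin: it avoids O and separates O from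
   infinity (every continuous path from O to a point farther away than
   the whole orbit meets the orbit). *)
Definition surrounds_origin (x y : R -> R) : Prop :=
  (forall t, ~ (x t = 0 /\ y t = 0)) /\
  forall c1 c2 : R -> R, continuity c1 -> continuity c2 ->
    c1 0 = 0 -> c2 0 = 0 ->
    (forall t, x t ^ 2 + y t ^ 2 < c1 1 ^ 2 + c2 1 ^ 2) ->
    exists s t, 0 <= s <= 1 /\ c1 s = x t /\ c2 s = y t.

Definition isochronous_center (P Q : R -> R -> R) : Prop :=
  exists r T, 0 < r /\ 0 < T /\
    forall x0 y0, 0 < x0 ^ 2 + y0 ^ 2 < r ^ 2 ->
      (exists x y, is_solution P Q x y /\ x 0 = x0 /\ y 0 = y0) /\
      (forall x y, is_solution P Q x y -> x 0 = x0 -> y 0 = y0 ->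
         closed_orbit_of_period x y T /\ surrounds_origin x y).

(* The system is written as
   x' = p0(x) + p1(x) y,  y' = q0(x) + q1(x) y + q2(x) y^2,  with
   p0(0) = q0(0) = 0, p1(0) <> 0 and the standing identity
   -p1' p0/p1 + q1 + p0' - 2 q2 p0/p1 = 0; then with
   f = -(q2+p1')/p1,  g = -q2 p0^2/p1 + q1 p0 - p1 q0,  F = int_0^x f,
   xi is defined near 0 by  xi^2/2 = int_0^x g e^{2F},  x xi(x) > 0 (x<>0);
   zero Urabe function means xi(x) = g(x) e^{F(x)} near 0, i.e. the function
   g e^F satisfies the (uniquely determining) defining property of xi. *)
Definition zero_urabe_function (P Q : R -> R -> R) : Prop :=
  exists p0 p1 q0 q1 q2 dp0 dp1 : R -> R,
    (forall x y, P x y = p0 x + p1 x * y) /\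
    (forall x y, Q x y = q0 x + q1 x * y + q2 x * y ^ 2) /\
    p0 0 = 0 /\ q0 0 = 0 /\ p1 0 <> 0 /\
    (forall x, derivable_pt_lim p0 x (dp0 x)) /\
    (forall x, derivable_pt_lim p1 x (dp1 x)) /\
    (forall x, p1 x <> 0 ->
       - dp1 x * p0 x / p1 x + q1 x + dp0 x - 2 * q2 x * p0 x / p1 x = 0) /\
    let f := fun x => - (q2 x + dp1 x) / p1 x in
    let g := fun x => - q2 x * p0 x ^ 2 / p1 x + q1 x * p0 x - p1 x * q0 x in
    let F := fun x => Rint f 0 x in
    exists delta, 0 < delta /\
      forall x, Rabs x < delta ->
        (x <> 0 -> 0 < x * (g x * exp (F x))) /\
        / 2 * (g x * exp (F x)) ^ 2 = Rint (fun s => g s * exp (2 * F s)) 0 x.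

Definition isochronous_zero_urabe (P Q : R -> R -> R) : Prop :=
  isochronous_center P Q /\ zero_urabe_function P Q.

(* All the systems have [p0 = - x^2 p1].  With [z = p0 + p1 y], the coordinates
   [u = g(x) e^F(x)] and [v = z e^F(x)] turn the system into the rotation [u' = v],
   [v' = - u] exactly when [(g e^F)' = e^F], the derivative form of the zero Urabe
   condition [xi = g e^F].  Since [g e^F] is increasing near 0, [(x, y) -> (u, v)] is a
   local diffeomorphism, so near O every orbit is a closed orbit of period [2 PI]
   around O: it is a level set of [u^2 + v^2], which separates O from infinity.
   For the three families, [(g e^F)' = e^F] is a polynomial identity modulo the
   defining relations of the square roots. *)

From Stdlib Require Import Reals Lra Psatz Nsatz List ClassicalEpsilon Classical
  FunctionalExtensionality Ranalysis5.
Import ListNotations.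
Open Scope R_scope.

Lemma continuity_pt_eps f x : continuity_pt f x -> forall e, 0 < e ->
  exists d, 0 < d /\ forall y, Rabs (y - x) < d -> Rabs (f y - f x) < e.
Proof.
  intros Hf e He. destruct (Hf e He) as [d [Hd Hy]]. exists d; split; auto.
  intros y Hyd. destruct (Req_dec y x) as [->|Hne].
  - unfold Rminus. rewrite Rplus_opp_r, Rabs_R0; auto.
  - apply (Hy y). repeat split; auto.
Qed.

Lemma continuity_pt_small_at_0 (k : R -> R) : continuity_pt k 0 -> k 0 = 0 ->
  forall e, 0 < e -> exists d, 0 < d /\ forall x, Rabs x < d -> Rabs (k x) < e.
Proof.
  intros Hk Hk0 e He. destruct (continuity_pt_eps k 0 Hk e He) as [d [Hd Hx]].
  exists d. split; auto. intros x Hxd. specialize (Hx x).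
  rewrite !Rminus_0_r, Hk0, Rminus_0_r in Hx. auto.
Qed.

Lemma continuity_pt_lt_nbhd f x K : continuity_pt f x -> f x < K ->
  exists d, 0 < d /\ forall y, Rabs (y - x) < d -> f y < K.
Proof.
  intros Hf HK. destruct (continuity_pt_eps f x Hf (K - f x)) as [d [Hd Hy]]; [lra|].
  exists d; split; auto. intros y Hyx. specialize (Hy y Hyx). apply Rabs_def2 in Hy. lra.
Qed.

Lemma continuity_pt_le_of_approx f x K : continuity_pt f x ->
  (forall d, 0 < d -> exists y, Rabs (y - x) < d /\ f y <= K) -> f x <= K.
Proof.
  intros Hf Happ. apply Rnot_lt_le. intro HKf.
  destruct (continuity_pt_eps f x Hf (f x - K)) as [d [Hd Hy]]; [lra|].
  destruct (Happ d Hd) as [y [Hyx Hfy]]. specialize (Hy y Hyx). apply Rabs_def2 in Hy. lra.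
Qed.

Lemma continuity_pt_Rabs f x : continuity_pt f x -> continuity_pt (fun y => Rabs (f y)) x.
Proof. intro Hf. exact (continuity_pt_comp f Rabs x Hf (Rcontinuity_abs (f x))). Qed.

Lemma approx_from_below s : 0 < s -> forall d, 0 < d -> exists y, Rabs (y - s) < d /\ 0 <= y < s.
Proof.
  intros Hs d Hd. exists (s - Rmin d s / 2).
  assert (0 < Rmin d s) by (apply Rmin_pos; lra).
  assert (Rmin d s <= d) by apply Rmin_l. assert (Rmin d s <= s) by apply Rmin_r.
  split; [|lra]. rewrite Rabs_left; lra.
Qed.

Lemma approx_from_inside z : 0 < Rabs z -> forall d, 0 < d ->
  exists y, Rabs (y - z) < d /\ Rabs y < Rabs z.
Proof.
  intros Hz d Hd. destruct (approx_from_below (Rabs z) Hz d Hd) as [y [Hy1 Hy2]].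
  destruct (Rle_dec 0 z).
  - rewrite (Rabs_right z) in Hy1, Hy2 |- * by lra. exists y. split; [lra|rewrite Rabs_right; lra].
  - rewrite (Rabs_left z) in Hy1, Hy2 |- * by lra. exists (- y).
    rewrite Rabs_Ropp, (Rabs_right y) by lra. split; [|lra].
    replace (- y - z) with (- (y - - z)) by ring. rewrite Rabs_Ropp. lra.
Qed.

Lemma D_eq f x l l' : derivable_pt_lim f x l -> l = l' -> derivable_pt_lim f x l'.
Proof. intros H ->; auto. Qed.
Lemma D_plus f g x a b : derivable_pt_lim f x a -> derivable_pt_lim g x b ->
  derivable_pt_lim (fun t => f t + g t) x (a + b).
Proof. intros; apply (derivable_pt_lim_plus f g); auto. Qed.
Lemma D_minus f g x a b : derivable_pt_lim f x a -> derivable_pt_lim g x b ->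
  derivable_pt_lim (fun t => f t - g t) x (a - b).
Proof. intros; apply (derivable_pt_lim_minus f g); auto. Qed.
Lemma D_mult f g x a b : derivable_pt_lim f x a -> derivable_pt_lim g x b ->
  derivable_pt_lim (fun t => f t * g t) x (a * g x + f x * b).
Proof. intros; apply (derivable_pt_lim_mult f g); auto. Qed.
Lemma D_opp f x a : derivable_pt_lim f x a -> derivable_pt_lim (fun t => - f t) x (- a).
Proof. intros; apply (derivable_pt_lim_opp f); auto. Qed.
Lemma D_const k x : derivable_pt_lim (fun _ => k) x 0.
Proof. apply derivable_pt_lim_const. Qed.
Lemma D_comp f g x a b : derivable_pt_lim g x a -> derivable_pt_lim f (g x) b ->
  derivable_pt_lim (fun t => f (g t)) x (b * a).
Proof. intros; apply (derivable_pt_lim_comp g f); auto. Qed.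
Lemma D_pow f x a n : derivable_pt_lim f x a ->
  derivable_pt_lim (fun t => f t ^ n) x (INR n * f x ^ (Nat.pred n) * a).
Proof. intros. apply (D_comp (fun y => y ^ n) f); auto. apply derivable_pt_lim_pow. Qed.
Lemma D_exp f x a : derivable_pt_lim f x a ->
  derivable_pt_lim (fun t => exp (f t)) x (exp (f x) * a).
Proof. intros. apply (D_comp exp f); auto. apply derivable_pt_lim_exp. Qed.
Lemma D_div f g x a b : g x <> 0 -> derivable_pt_lim f x a -> derivable_pt_lim g x b ->
  derivable_pt_lim (fun t => f t / g t) x ((a * g x - b * f x) / (g x)²).
Proof. intros; apply (derivable_pt_lim_div f g); auto. Qed.
Lemma D_cont f x a : derivable_pt_lim f x a -> continuity_pt f x.
Proof. intros H. apply derivable_continuous_pt. exists a. exact H. Qed.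

Lemma C_plus f g x : continuity_pt f x -> continuity_pt g x ->
  continuity_pt (fun t => f t + g t) x.
Proof. intros; apply (continuity_pt_plus f g); auto. Qed.
Lemma C_minus f g x : continuity_pt f x -> continuity_pt g x ->
  continuity_pt (fun t => f t - g t) x.
Proof. intros; apply (continuity_pt_minus f g); auto. Qed.
Lemma C_mult f g x : continuity_pt f x -> continuity_pt g x ->
  continuity_pt (fun t => f t * g t) x.
Proof. intros; apply (continuity_pt_mult f g); auto. Qed.
Lemma C_opp f x : continuity_pt f x -> continuity_pt (fun t => - f t) x.
Proof. intros; apply (continuity_pt_opp f); auto. Qed.
Lemma C_div f g x : continuity_pt f x -> continuity_pt g x -> g x <> 0 ->
  continuity_pt (fun t => f t / g t) x.
Proof. intros; apply (continuity_pt_div f g); auto. Qed.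
Lemma C_comp f g x : continuity_pt g x -> continuity_pt f (g x) ->
  continuity_pt (fun t => f (g t)) x.
Proof. intros; apply (continuity_pt_comp g f); auto. Qed.
Lemma C_pow f x n : continuity_pt f x -> continuity_pt (fun t => f t ^ n) x.
Proof.
  intros. apply (C_comp (fun y => y ^ n) f); auto.
  apply (D_cont _ _ _ (derivable_pt_lim_pow _ n)).
Qed.
Lemma C_const k x : continuity_pt (fun _ => k) x.
Proof. apply continuity_pt_const. intros a b; auto. Qed.
Lemma C_id x : continuity_pt (fun t => t) x.
Proof. apply (D_cont _ _ _ (derivable_pt_lim_id x)). Qed.

Lemma derivable_pt_lim_locally_eq f g x l d : 0 < d ->
  (forall y, Rabs (y - x) < d -> f y = g y) ->
  derivable_pt_lim f x l -> derivable_pt_lim g x l.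
Proof.
  intros Hd Heq H eps He. destruct (H eps He) as [del Hdel].
  assert (Hp : 0 < Rmin del d) by (apply Rmin_pos; [apply cond_pos|lra]).
  assert (Rmin del d <= del) by apply Rmin_l. assert (Rmin del d <= d) by apply Rmin_r.
  exists (mkposreal _ Hp). intros k Hk0 Hk. simpl in Hk.
  rewrite <- (Heq (x + k)), <- (Heq x).
  - apply Hdel; auto. lra.
  - unfold Rminus. rewrite Rplus_opp_r, Rabs_R0. lra.
  - replace (x + k - x) with k by ring. lra.
Qed.

Lemma null_derivative_interval e a b : a <= b ->
  (forall t, a <= t <= b -> derivable_pt_lim e t 0) -> forall t, a <= t <= b -> e t = e a.
Proof.
  intros Hab Hd t Ht.
  assert (pr : forall x, a < x < b -> derivable_pt e x).
  { intros x Hx. exists 0. apply Hd. lra. }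
  apply (null_derivative_loc e a b pr); auto.
  - intros x Hx. exact (D_cont _ _ _ (Hd x Hx)).
  - intros x P. apply derive_pt_eq_0. apply Hd. lra.
Qed.

Lemma null_derivative_global e : (forall t, derivable_pt_lim e t 0) -> forall t, e t = e 0.
Proof.
  intros Hd t. destruct (Rle_dec 0 t).
  - apply (null_derivative_interval e 0 t); auto; lra.
  - symmetry. apply (null_derivative_interval e t 0); auto; lra.
Qed.

Lemma null_derivative_symmetric e T : 0 <= T ->
  (forall t, -T <= t <= T -> derivable_pt_lim e t 0) -> forall t, -T <= t <= T -> e t = e 0.
Proof.
  intros HT Hd t Ht. rewrite (null_derivative_interval e (-T) T ltac:(lra) Hd t Ht).
  symmetry. apply (null_derivative_interval e (-T) T); lra || auto.
Qed.

Lemma Rint_RiemannInt f a b (pr : Riemann_integrable f a b) : Rint f a b = RiemannInt pr.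
Proof.
  unfold Rint.
  destruct (epsilon_spec (inhabits 0)
              (fun v => exists pr : Riemann_integrable f a b, RiemannInt pr = v))
    as [pr' <-].
  - exists (RiemannInt pr), pr. reflexivity.
  - apply RiemannInt_P5.
Qed.

Lemma Rint_0 f : Rint f 0 0 = 0.
Proof. rewrite (Rint_RiemannInt f 0 0 (RiemannInt_P7 f 0)). apply RiemannInt_P9. Qed.

Lemma derivable_pt_lim_Rint f c x : 0 < c ->
  (forall y, -c <= y <= c -> continuity_pt f y) ->
  -c < x < c -> derivable_pt_lim (fun y => Rint f 0 y) x (f x).
Proof.
  intros Hc Hf Hx.
  assert (Hle : -c <= c) by lra.
  set (prim := primitive Hle (FTC_P1 Hle Hf)).
  assert (Hprim : derivable_pt_lim (fun y => prim y - prim 0) x (f x - 0)).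
  { apply (derivable_pt_lim_minus prim (fun _ => prim 0)).
    - apply RiemannInt_P27; auto.
    - apply derivable_pt_lim_const. }
  replace (f x) with (f x - 0) by ring.
  apply (derivable_pt_lim_locally_eq (fun y => prim y - prim 0) _ x _ (Rmin (c - x) (x + c)));
    [apply Rmin_pos; lra| |exact Hprim].
  intros y Hy.
  assert (Rmin (c - x) (x + c) <= c - x) by apply Rmin_l.
  assert (Rmin (c - x) (x + c) <= x + c) by apply Rmin_r.
  apply Rabs_def2 in Hy.
  assert (Hprim_val : forall z (H1 : -c <= z) (H2 : z <= c),
             prim z = RiemannInt (FTC_P1 Hle Hf H1 H2)).
  { intros z H1 H2. unfold prim, primitive.
    destruct (Rle_dec (-c) z); [|contradiction]. destruct (Rle_dec z c); [|contradiction].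
    apply RiemannInt_P5. }
  assert (Hy0 : -c <= y) by lra. assert (Hyc : y <= c) by lra.
  assert (H00 : -c <= 0) by lra. assert (H0c : 0 <= c) by lra.
  rewrite (Hprim_val y Hy0 Hyc), (Hprim_val 0 H00 H0c).
  assert (pr : Riemann_integrable f 0 y).
  { destruct (Rle_dec 0 y).
    - apply continuity_implies_RiemannInt; auto. intros z Hz. apply Hf. lra.
    - apply RiemannInt_P1, continuity_implies_RiemannInt; [lra|].
      intros z Hz. apply Hf. lra. }
  rewrite (Rint_RiemannInt f 0 y pr),
    <- (RiemannInt_P26 (FTC_P1 Hle Hf H00 H0c) pr (FTC_P1 Hle Hf Hy0 Hyc)).
  ring.
Qed.

Lemma Rabs_between r : - Rabs r <= r <= Rabs r.
Proof. pose proof (RRle_abs (- r)). rewrite Rabs_Ropp in H. pose proof (RRle_abs r). lra. Qed.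

Lemma continuity_pt_eq_of_approx f x K : continuity_pt f x ->
  (forall d, 0 < d -> exists y, Rabs (y - x) < d /\ f y = K) -> f x = K.
Proof.
  intros Hf Happ. apply Rle_antisym.
  - apply (continuity_pt_le_of_approx f x K Hf).
    intros d Hd. destruct (Happ d Hd) as [y [Hy Hfy]]. exists y. split; auto. lra.
  - enough (- f x <= - K) by lra.
    apply (continuity_pt_le_of_approx (fun y => - f y) x (- K) (continuity_pt_opp f x Hf)).
    intros d Hd. destruct (Happ d Hd) as [y [Hy Hfy]]. exists y. split; auto. lra.
Qed.

Lemma first_exit (A : R -> Prop) L : 0 < L -> A 0 -> ~ A L ->
  (forall s, 0 <= s <= L -> A s -> exists e, 0 < e /\ forall s', Rabs (s' - s) < e -> A s') ->
  exists s, 0 < s <= L /\ (forall r, 0 <= r < s -> A r) /\ ~ A s.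
Proof.
  intros HL HA0 HAL Hopen.
  set (E := fun s => 0 <= s <= L /\ forall r, 0 <= r <= s -> A r).
  assert (Hb : bound E) by (exists L; intros s [Hs _]; lra).
  assert (He : exists s, E s).
  { exists 0. split; [lra|]. intros r Hr. replace r with 0 by lra. auto. }
  destruct (completeness E Hb He) as [m [Hub Hlub]].
  assert (HmL : m <= L) by (apply Hlub; intros s [Hs _]; lra).
  assert (Hbelow : forall r, 0 <= r < m -> A r).
  { intros r Hr. apply NNPP. intro Hn.
    enough (m <= r) by lra. apply Hlub. intros s [Hs Hs2].
    apply Rnot_lt_le. intro Hrs. apply Hn, Hs2. lra. }
  assert (Hm0 : 0 < m).
  { destruct (Hopen 0 ltac:(lra) HA0) as [e [He0 He']].
    assert (Rmin (e / 2) L <= e / 2) by apply Rmin_l.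
    assert (0 < Rmin (e / 2) L) by (apply Rmin_pos; lra).
    enough (E (Rmin (e / 2) L)) by (specialize (Hub _ H1); lra).
    split; [split; [lra|apply Rmin_r]|].
    intros r Hr. apply He'. rewrite Rminus_0_r, Rabs_right; lra. }
  exists m. split; [lra|]. split; auto.
  intro HAm. destruct (Hopen m ltac:(lra) HAm) as [e [He0 He']].
  assert (Hm' : E (Rmin L (m + e / 2))).
  { assert (Rmin L (m + e / 2) <= m + e / 2) by apply Rmin_r.
    split; [split; [apply Rmin_glb; lra|apply Rmin_l]|].
    intros r Hr. destruct (Rlt_dec r m); [apply Hbelow; lra|].
    apply He'. rewrite Rabs_right; lra. }
  specialize (Hub _ Hm'). unfold Rmin in Hub. destruct (Rle_dec L (m + e / 2)).
  - assert (m = L) by lra. subst m. contradiction.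
  - lra.
Qed.

Lemma trapped_by_first_integral (w e : R -> R) h :
  (forall t, continuity_pt w t) ->
  (forall t, Rabs (w t) <= h -> continuity_pt e t) ->
  (forall t, Rabs (w t) < h -> derivable_pt_lim e t 0) ->
  (forall t, Rabs (w t) <= h -> e t = e 0 -> Rabs (w t) < h) ->
  Rabs (w 0) < h -> forall t, Rabs (w t) < h.
Proof.
  intros Hw He Hde Hgap H0 t0. apply NNPP. intro Hn.
  assert (HL : 0 < Rabs t0).
  { apply Rabs_pos_lt. intros ->. contradiction. }
  set (A := fun s => Rabs (w s) < h /\ Rabs (w (- s)) < h).
  destruct (first_exit A (Rabs t0) HL) as [s [Hs [Hbelow HnA]]].
  - split; [|rewrite Ropp_0]; auto.
  - intros [H1 H2]. unfold Rabs at 2 in H1. unfold Rabs at 2 in H2.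
    destruct (Rcase_abs t0); [rewrite Ropp_involutive in H2|]; contradiction.
  - intros s _ [H1 H2].
    destruct (continuity_pt_lt_nbhd _ s h (continuity_pt_Rabs w s (Hw s)) H1)
      as [d1 [Hd1 Hd1']].
    destruct (continuity_pt_lt_nbhd _ (- s) h (continuity_pt_Rabs w (- s) (Hw (- s))) H2)
      as [d2 [Hd2 Hd2']].
    assert (Rmin d1 d2 <= d1) by apply Rmin_l. assert (Rmin d1 d2 <= d2) by apply Rmin_r.
    exists (Rmin d1 d2). split; [apply Rmin_pos; auto|].
    intros s' Hs'. split; [apply Hd1'; lra|].
    apply Hd2'. replace (- s' - - s) with (- (s' - s)) by ring. rewrite Rabs_Ropp. lra.
  - assert (Hin : forall r, Rabs r < s -> Rabs (w r) < h).
    { intros r Hr. destruct (Rle_dec 0 r).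
      + rewrite Rabs_right in Hr by lra. apply (Hbelow r). lra.
      + rewrite Rabs_left in Hr by lra. replace r with (- - r) by ring.
        apply (Hbelow (- r)). lra. }
    assert (Hconst : forall r, Rabs r < s -> e r = e 0).
    { intros r Hr. apply (null_derivative_symmetric e (Rabs r) (Rabs_pos r)).
      - intros r' Hr'. apply Hde, Hin. apply Rle_lt_trans with (2 := Hr), Rabs_le. lra.
      - apply Rabs_between. }
    assert (Hboundary : forall z, Rabs z = s -> Rabs (w z) < h).
    { intros z Hz. rewrite <- Hz in *.
      assert (Hwz : Rabs (w z) <= h).
      { apply (continuity_pt_le_of_approx _ z h (continuity_pt_Rabs w z (Hw z))).
        intros d Hd. destruct (approx_from_inside z (proj1 Hs) d Hd) as [y [Hy1 Hy2]].
        exists y. split; auto. left. apply Hin; auto. }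
      apply Hgap; auto. apply (continuity_pt_eq_of_approx e z); auto.
      intros d Hd. destruct (approx_from_inside z (proj1 Hs) d Hd) as [y [Hy1 Hy2]].
      exists y. split; auto. }
    apply HnA. split; apply Hboundary; [|rewrite Rabs_Ropp]; apply Rabs_right; lra.
Qed.

Lemma path_exit (w e : R -> R) h E :
  (forall s, continuity_pt w s) ->
  (forall s, Rabs (w s) <= h -> continuity_pt e s) ->
  (forall s, Rabs (w s) <= h -> e s <= E -> Rabs (w s) < h) ->
  Rabs (w 0) < h /\ e 0 < E ->
  ~ (Rabs (w 1) < h /\ e 1 < E) ->
  exists s, 0 <= s <= 1 /\ Rabs (w s) < h /\ e s = E.
Proof.
  intros Hw He Hgap H0 H1.
  destruct (first_exit (fun s => Rabs (w s) < h /\ e s < E) 1 Rlt_0_1 H0 H1)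
    as [s [Hs [Hbelow HnA]]].
  - intros s Hs [A1 A2].
    destruct (continuity_pt_lt_nbhd _ s h (continuity_pt_Rabs w s (Hw s)) A1)
      as [d1 [Hd1 Hd1']].
    destruct (continuity_pt_lt_nbhd e s E (He s ltac:(lra)) A2) as [d2 [Hd2 Hd2']].
    assert (Rmin d1 d2 <= d1) by apply Rmin_l. assert (Rmin d1 d2 <= d2) by apply Rmin_r.
    exists (Rmin d1 d2). split; [apply Rmin_pos; auto|].
    intros s' Hs'. split; [apply Hd1'|apply Hd2']; lra.
  - assert (Hws : Rabs (w s) <= h).
    { apply (continuity_pt_le_of_approx _ s h (continuity_pt_Rabs w s (Hw s))).
      intros d Hd. destruct (approx_from_below s ltac:(lra) d Hd) as [y [Hy1 Hy2]].
      exists y. split; auto. left. apply Hbelow; auto. }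
    assert (Hes : e s <= E).
    { apply continuity_pt_le_of_approx; auto.
      intros d Hd. destruct (approx_from_below s ltac:(lra) d Hd) as [y [Hy1 Hy2]].
      exists y. split; auto. left. apply Hbelow; auto. }
    assert (Hws' := Hgap s Hws Hes).
    exists s. split; [lra|]. split; auto.
    destruct Hes as [Hlt|]; auto. exfalso. apply HnA. split; auto.
Qed.

Lemma polar_angle a b : a ^ 2 + b ^ 2 = 1 -> exists th, cos th = a /\ sin th = b.
Proof.
  intros H.
  assert (Ha : -1 <= a <= 1) by nra.
  assert (Hs : sqrt (1 - a²) = Rabs b) by (rewrite <- sqrt_Rsqr_abs; f_equal; unfold Rsqr; nra).
  destruct (Rle_dec 0 b).
  - exists (acos a). rewrite cos_acos, sin_acos, Hs, Rabs_right by (auto || lra). auto.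
  - exists (- acos a). rewrite cos_neg, sin_neg, cos_acos, sin_acos, Hs, Rabs_left by (auto || lra).
    split; [reflexivity|ring].
Qed.

Lemma pow2_lt_of_Rabs a b : Rabs a < b -> a ^ 2 < b ^ 2.
Proof. intros H. rewrite <- (pow2_abs a). pose proof (Rabs_pos a). nra. Qed.

Lemma Rabs_lt_of_pow2 a b : 0 <= b -> a ^ 2 < b ^ 2 -> Rabs a < b.
Proof. intros H H2. rewrite <- (pow2_abs a) in H2. pose proof (Rabs_pos a). nra. Qed.

Lemma pow2_sum_eq_0 r s : r ^ 2 + s ^ 2 = 0 -> r = 0 /\ s = 0.
Proof. intros H. split; nra. Qed.

Definition rot_u u0 v0 t := u0 * cos t + v0 * sin t.
Definition rot_v u0 v0 t := - u0 * sin t + v0 * cos t.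

Lemma rot_u_derivable u0 v0 t : derivable_pt_lim (rot_u u0 v0) t (rot_v u0 v0 t).
Proof.
  unfold rot_u, rot_v. eapply D_eq.
  - apply D_plus; apply D_mult; try apply D_const.
    + apply derivable_pt_lim_cos.
    + apply derivable_pt_lim_sin.
  - cbv beta. ring.
Qed.

Lemma rot_v_derivable u0 v0 t : derivable_pt_lim (rot_v u0 v0) t (- rot_u u0 v0 t).
Proof.
  unfold rot_u, rot_v. eapply D_eq.
  - apply D_plus; apply D_mult; try apply D_const.
    + apply derivable_pt_lim_sin.
    + apply derivable_pt_lim_cos.
  - cbv beta. ring.
Qed.

Lemma rot_norm u0 v0 t : rot_u u0 v0 t ^ 2 + rot_v u0 v0 t ^ 2 = u0 ^ 2 + v0 ^ 2.
Proof.
  unfold rot_u, rot_v. pose proof (sin2_cos2 t) as H. unfold Rsqr in H.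
  transitivity ((u0 ^ 2 + v0 ^ 2) * (sin t * sin t + cos t * cos t)); [ring|].
  rewrite H. ring.
Qed.

Lemma rot_0 u0 v0 : rot_u u0 v0 0 = u0 /\ rot_v u0 v0 0 = v0.
Proof. unfold rot_u, rot_v. rewrite cos_0, sin_0. split; ring. Qed.

Lemma rot_periodic u0 v0 t :
  rot_u u0 v0 (t + 2 * PI) = rot_u u0 v0 t /\ rot_v u0 v0 (t + 2 * PI) = rot_v u0 v0 t.
Proof. unfold rot_u, rot_v. rewrite cos_plus, sin_plus, cos_2PI, sin_2PI. split; ring. Qed.

Lemma rot_return_trivial u0 v0 s : 0 < s < 2 * PI ->
  rot_u u0 v0 s = u0 -> rot_v u0 v0 s = v0 -> u0 = 0 /\ v0 = 0.
Proof.
  unfold rot_u, rot_v. intros Hs Hu Hv.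
  assert (Hcos : cos s < 1).
  { replace s with (2 * (s / 2)) by field. rewrite cos_2a_sin.
    assert (0 < sin (s / 2)) by (apply sin_gt_0; lra). nra. }
  pose proof (sin2_cos2 s) as Hq. unfold Rsqr in Hq.
  assert (Hk : 0 < (cos s - 1) ^ 2 + sin s ^ 2) by nra.
  (* [(cos s - 1)^2 + sin s ^2] is the determinant of the linear system for [(u0, v0)] *)
  assert (E1 : (cos s - 1) * u0 + sin s * v0 = 0) by lra.
  assert (E2 : - sin s * u0 + (cos s - 1) * v0 = 0) by lra.
  split; apply (Rmult_eq_reg_l ((cos s - 1) ^ 2 + sin s ^ 2)); try lra.
  - transitivity ((cos s - 1) * ((cos s - 1) * u0 + sin s * v0)
                  - sin s * (- sin s * u0 + (cos s - 1) * v0)); [ring|].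
    rewrite E1, E2. ring.
  - transitivity (sin s * ((cos s - 1) * u0 + sin s * v0)
                  + (cos s - 1) * (- sin s * u0 + (cos s - 1) * v0)); [ring|].
    rewrite E1, E2. ring.
Qed.

Lemma rot_polar rho al th :
  rot_u (rho * cos al) (rho * sin al) (al - th) = rho * cos th /\
  rot_v (rho * cos al) (rho * sin al) (al - th) = rho * sin th.
Proof.
  unfold rot_u, rot_v. rewrite cos_minus, sin_minus.
  pose proof (sin2_cos2 al) as Hq. unfold Rsqr in Hq. split.
  - transitivity (rho * cos th * (sin al * sin al + cos al * cos al)); [ring|]. rewrite Hq. ring.
  - transitivity (rho * sin th * (sin al * sin al + cos al * cos al)); [ring|]. rewrite Hq. ring.
Qed.

Lemma rot_onto_circle u0 v0 a b : a ^ 2 + b ^ 2 = u0 ^ 2 + v0 ^ 2 ->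
  exists t, rot_u u0 v0 t = a /\ rot_v u0 v0 t = b.
Proof.
  intros Hab. destruct (Req_dec (u0 ^ 2 + v0 ^ 2) 0) as [H0|H0].
  - destruct (pow2_sum_eq_0 u0 v0 H0) as [-> ->].
    destruct (pow2_sum_eq_0 a b ltac:(lra)) as [-> ->].
    exists 0. apply rot_0.
  - set (rho := sqrt (u0 ^ 2 + v0 ^ 2)).
    assert (Hrho : 0 < rho) by (apply sqrt_lt_R0; nra).
    assert (Hrho2 : rho * rho = u0 ^ 2 + v0 ^ 2) by (apply sqrt_sqrt; nra).
    destruct (polar_angle (u0 / rho) (v0 / rho)) as [al [Hca Hsa]].
    { field_simplify_eq; lra. }
    destruct (polar_angle (a / rho) (b / rho)) as [th [Hct Hst]].
    { field_simplify_eq; lra. }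
    exists (al - th).
    replace u0 with (rho * cos al) by (rewrite Hca; field; lra).
    replace v0 with (rho * sin al) by (rewrite Hsa; field; lra).
    rewrite (proj1 (rot_polar rho al th)), (proj2 (rot_polar rho al th)), Hct, Hst.
    split; field; lra.
Qed.

Section LinearizableSystem.

Variables p1 dp1 q0 q1 q2 dq0 dq1 dq2 : R -> R.
Hypothesis p1_derivable : forall x, derivable_pt_lim p1 x (dp1 x).
Hypothesis q0_derivable : forall x, derivable_pt_lim q0 x (dq0 x).
Hypothesis q1_derivable : forall x, derivable_pt_lim q1 x (dq1 x).
Hypothesis q2_derivable : forall x, derivable_pt_lim q2 x (dq2 x).
Hypothesis dp1_continuous : forall x, continuity_pt dp1 x.
Hypothesis q0_at_0 : q0 0 = 0.
(* the paper's standing identity, for [p0 = - x^2 p1] *)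
Hypothesis q1_standing : forall x, q1 x = 2 * x * p1 x - 2 * x ^ 2 * q2 x.

Definition p0 x := - x ^ 2 * p1 x.
Definition dp0 x := - (2 * x * p1 x + x ^ 2 * dp1 x).
(* the paper's [g = - q2 p0^2 / p1 + q1 p0 - p1 q0], simplified using [p0 = - x^2 p1] *)
Definition g x := - p1 x * (q0 x + q1 x * x ^ 2 + q2 x * x ^ 4).
Definition dg x := - (dp1 x * (q0 x + q1 x * x ^ 2 + q2 x * x ^ 4) +
   p1 x * (dq0 x + (dq1 x * x ^ 2 + q1 x * (2 * x)) + (dq2 x * x ^ 4 + q2 x * (4 * x ^ 3)))).
(* [g' + f g = 1], i.e. [(g e^F)' = e^F] *)
Hypothesis zero_urabe_equation : forall x, dg x * p1 x - (q2 x + dp1 x) * g x = p1 x.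

Definition Psys x y := p0 x + p1 x * y.
Definition Qsys x y := q0 x + q1 x * y + q2 x * y ^ 2.
Definition f x := - (q2 x + dp1 x) / p1 x.
Definition F x := Rint f 0 x.
Definition G x := g x * exp (F x).
(* In the coordinates [u = G x], [v = V x y] the system becomes [u' = v], [v' = - u]. *)
Definition V x y := Psys x y * exp (F x).
Definition energy x y := G x ^ 2 + V x y ^ 2.

Variable c : R.
Hypothesis c_pos : 0 < c.
Hypothesis p1_nonzero : forall x, Rabs x <= c -> p1 x <> 0.

Lemma p0_derivable x : derivable_pt_lim p0 x (dp0 x).
Proof.
  unfold p0, dp0. eapply D_eq.
  - apply D_mult; [apply D_opp, D_pow, derivable_pt_lim_id|apply p1_derivable].
  - simpl. ring.
Qed.

Lemma g_derivable x : derivable_pt_lim g x (dg x).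
Proof.
  unfold g, dg. eapply D_eq.
  - apply D_mult; [apply D_opp, p1_derivable|].
    repeat apply D_plus; try apply D_mult; auto; apply D_pow, derivable_pt_lim_id.
  - simpl. ring.
Qed.

Lemma f_continuous x : Rabs x <= c -> continuity_pt f x.
Proof.
  intros Hx. apply C_div; auto.
  - apply C_opp, C_plus; auto. exact (D_cont _ _ _ (q2_derivable x)).
  - exact (D_cont _ _ _ (p1_derivable x)).
Qed.

Lemma F_derivable x : Rabs x < c -> derivable_pt_lim F x (f x).
Proof.
  intros Hx. apply Rabs_def2 in Hx. apply (derivable_pt_lim_Rint f c x c_pos); [|lra].
  intros y Hy. apply f_continuous, Rabs_le. lra.
Qed.

Lemma F_0 : F 0 = 0.
Proof. apply Rint_0. Qed.

Lemma G_0 : G 0 = 0.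
Proof. unfold G, g. rewrite q0_at_0. ring. Qed.

Lemma G_derivable x : Rabs x < c -> derivable_pt_lim G x (exp (F x)).
Proof.
  intros Hx. assert (Hp : p1 x <> 0) by (apply p1_nonzero; lra).
  unfold G. eapply D_eq.
  - apply D_mult; [apply g_derivable|apply D_exp, F_derivable; auto].
  - pose proof (zero_urabe_equation x). unfold f.
    replace (dg x) with ((p1 x + (q2 x + dp1 x) * g x) / p1 x) by (field_simplify_eq; lra).
    field. auto.
Qed.

Lemma G_continuous x : Rabs x < c -> continuity_pt G x.
Proof. intros Hx. exact (D_cont _ _ _ (G_derivable x Hx)). Qed.

Lemma G_increasing a b : -c < a -> a < b -> b < c -> G a < G b.
Proof.
  intros Ha Hab Hb.
  destruct (MVT_cor2 G (fun x => exp (F x)) a b Hab) as [z [Hz1 Hz2]].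
  - intros z Hz. apply G_derivable, Rabs_def1; lra.
  - pose proof (exp_pos (F z)). nra.
Qed.

Lemma G_injective a b : Rabs a < c -> Rabs b < c -> G a = G b -> a = b.
Proof.
  intros Ha Hb Hab. apply Rabs_def2 in Ha. apply Rabs_def2 in Hb.
  destruct (Rtotal_order a b) as [H|[H|H]]; auto.
  - pose proof (G_increasing a b ltac:(lra) H ltac:(lra)). lra.
  - pose proof (G_increasing b a ltac:(lra) H ltac:(lra)). lra.
Qed.

Lemma G_sign x : Rabs x < c -> x <> 0 -> 0 < x * G x.
Proof.
  intros Hx Hx0. apply Rabs_def2 in Hx. destruct (Rtotal_order x 0) as [H|[H|H]].
  - pose proof (G_increasing x 0 ltac:(lra) H ltac:(lra)). rewrite G_0 in *. nra.
  - contradiction.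
  - pose proof (G_increasing 0 x ltac:(lra) H ltac:(lra)). rewrite G_0 in *. nra.
Qed.

Lemma V_injective x y y' : Rabs x <= c -> V x y = V x y' -> y = y'.
Proof.
  intros Hx HV. apply Rmult_eq_reg_r in HV; [|apply Rgt_not_eq, exp_pos].
  unfold Psys in HV. apply (Rmult_eq_reg_l (p1 x)); [lra|auto].
Qed.

Lemma energy_pos x y : Rabs x < c -> ~ (x = 0 /\ y = 0) -> 0 < energy x y.
Proof.
  intros Hx Hxy. destruct (Rle_lt_dec (energy x y) 0) as [Hle|]; auto.
  destruct Hxy. pose proof (pow2_ge_0 (G x)). pose proof (pow2_ge_0 (V x y)).
  destruct (pow2_sum_eq_0 (G x) (V x y) ltac:(unfold energy in Hle; lra)) as [HG HV].
  assert (Hx0 : x = 0) by (apply G_injective; [auto|rewrite Rabs_R0; lra|rewrite G_0; auto]).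
  subst x. split; auto. apply (V_injective 0); [rewrite Rabs_R0; lra|].
  rewrite HV. unfold V, Psys, p0. rewrite F_0. ring.
Qed.

Lemma energy_continuous (a b : R -> R) s : continuity_pt a s -> continuity_pt b s ->
  Rabs (a s) < c -> continuity_pt (fun s => energy (a s) (b s)) s.
Proof.
  intros Ha Hb Has. unfold energy, V, Psys.
  apply C_plus; apply C_pow.
  - apply (C_comp G a); auto. apply G_continuous; auto.
  - apply C_mult; [apply C_plus; [|apply C_mult; auto]|].
    + apply (C_comp p0 a); auto. exact (D_cont _ _ _ (p0_derivable _)).
    + apply (C_comp p1 a); auto. exact (D_cont _ _ _ (p1_derivable _)).
    + apply (C_comp (fun z => exp (F z)) a); auto.
      exact (D_cont _ _ _ (D_exp _ _ _ (F_derivable _ Has))).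
Qed.

Definition xmax := c / 2.
(* [G] maps [[-xmax, xmax]] onto an interval containing [[-Gmin, Gmin]]. *)
Definition Gmin := Rmin (G xmax) (- G (- xmax)).

Lemma xmax_pos : 0 < xmax. Proof. unfold xmax. lra. Qed.
Lemma xmax_lt_c : xmax < c. Proof. unfold xmax. lra. Qed.

Lemma G_xmax : 0 < G xmax /\ G (- xmax) < 0.
Proof.
  unfold xmax. rewrite <- G_0. split; apply G_increasing; lra.
Qed.

Lemma Gmin_pos : 0 < Gmin.
Proof. pose proof G_xmax. unfold Gmin. apply Rmin_pos; lra. Qed.

Lemma Gmin_le : Gmin <= G xmax /\ Gmin <= - G (- xmax).
Proof. split; [apply Rmin_l|apply Rmin_r]. Qed.

Lemma interior_of_small_G a : Rabs a <= xmax -> Rabs (G a) < Gmin -> Rabs a < xmax.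
Proof.
  intros Ha HG. pose proof G_xmax. pose proof Gmin_le.
  destruct Ha as [|Heq]; auto. exfalso. unfold Rabs in Heq, HG.
  destruct (Rcase_abs a).
  - replace a with (- xmax) in HG by lra. destruct (Rcase_abs (G (- xmax))); lra.
  - subst a. destruct (Rcase_abs (G xmax)); lra.
Qed.

Lemma interior_of_small_energy a b : Rabs a <= xmax -> energy a b < Gmin ^ 2 -> Rabs a < xmax.
Proof.
  intros Ha HE. apply interior_of_small_G; auto.
  apply Rabs_lt_of_pow2; [pose proof Gmin_pos; lra|].
  unfold energy in HE. pose proof (pow2_ge_0 (V a b)). lra.
Qed.

Lemma small_disk : exists r, 0 < r /\ forall x y, x ^ 2 + y ^ 2 < r ^ 2 ->
  Rabs x < xmax /\ energy x y < Gmin ^ 2.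
Proof.
  pose proof Gmin_pos as Hm. pose proof xmax_pos as Hh.
  assert (Hc0 : Rabs 0 < c) by (rewrite Rabs_R0; lra).
  set (K := Rabs (p1 0 * exp (F 0)) + 1).
  assert (HK : 0 < K) by (unfold K; pose proof (Rabs_pos (p1 0 * exp (F 0))); lra).
  assert (Hexp : continuity_pt (fun x => exp (F x)) 0)
    by exact (D_cont _ _ _ (D_exp _ _ _ (F_derivable 0 Hc0))).
  (* [V x y = p0 x e^(F x) + (p1 x e^(F x)) y], with [p0 0 = 0] *)
  destruct (continuity_pt_small_at_0 G (G_continuous 0 Hc0) G_0 (Gmin / 2))
    as [d1 [Hd1 H1]]; [lra|].
  destruct (continuity_pt_small_at_0 (fun x => p0 x * exp (F x))
              (C_mult _ _ _ (D_cont _ _ _ (p0_derivable 0)) Hexp)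
              ltac:(unfold p0; ring) (Gmin / 4)) as [d2 [Hd2 H2]]; [lra|].
  destruct (continuity_pt_eps (fun x => p1 x * exp (F x)) 0
              (C_mult _ _ _ (D_cont _ _ _ (p1_derivable 0)) Hexp) 1) as [d3 [Hd3 H3]]; [lra|].
  set (r := Rmin (Rmin d1 d2) (Rmin d3 (Rmin xmax (Gmin / (4 * K))))).
  assert (Hr : r <= d1 /\ r <= d2 /\ r <= d3 /\ r <= xmax /\ r <= Gmin / (4 * K)).
  { unfold r, Rmin. repeat destruct Rle_dec; repeat split; lra. }
  assert (Hr0 : 0 < r).
  { unfold r. repeat apply Rmin_pos; auto. apply Rdiv_lt_0_compat; lra. }
  destruct Hr as [R1 [R2 [R3 [R4 R5]]]].
  exists r. split; auto. intros x y Hxy.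
  assert (Hx : Rabs x < r) by (apply Rabs_lt_of_pow2; nra).
  assert (Hy : Rabs y < r) by (apply Rabs_lt_of_pow2; nra).
  split; [lra|].
  specialize (H1 x ltac:(lra)). specialize (H2 x ltac:(lra)). cbv beta in H2.
  specialize (H3 x ltac:(rewrite Rminus_0_r; lra)).
  assert (Hp1 : Rabs (p1 x * exp (F x)) < K).
  { pose proof (Rabs_triang_inv (p1 x * exp (F x)) (p1 0 * exp (F 0))). unfold K. lra. }
  assert (HV : Rabs (V x y) < Gmin / 2).
  { unfold V, Psys. replace ((p0 x + p1 x * y) * exp (F x))
      with (p0 x * exp (F x) + p1 x * exp (F x) * y) by ring.
    eapply Rle_lt_trans; [apply Rabs_triang|]. rewrite (Rabs_mult _ y).
    assert (Hprod : Rabs (p1 x * exp (F x)) * Rabs y <= K * (Gmin / (4 * K)))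
      by (apply Rmult_le_compat; try apply Rabs_pos; lra).
    replace (K * (Gmin / (4 * K))) with (Gmin / 4) in Hprod by (field; lra). lra. }
  unfold energy. pose proof (pow2_lt_of_Rabs _ _ H1). pose proof (pow2_lt_of_Rabs _ _ HV). nra.
Qed.

Lemma G_along_solution x y t : is_solution Psys Qsys x y -> Rabs (x t) < c ->
  derivable_pt_lim (fun t => G (x t)) t (V (x t) (y t)).
Proof.
  intros Hs Hx. eapply D_eq.
  - apply (D_comp G x); [apply (proj1 (Hs t))|apply G_derivable; auto].
  - unfold V. ring.
Qed.

Lemma V_along_solution x y t : is_solution Psys Qsys x y -> Rabs (x t) < c ->
  derivable_pt_lim (fun t => V (x t) (y t)) t (- G (x t)).
Proof.
  intros Hs Hx. destruct (Hs t) as [Hx' Hy'].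
  assert (Hp : p1 (x t) <> 0) by (apply p1_nonzero; lra).
  unfold V. eapply D_eq.
  - apply D_mult; [unfold Psys; apply D_plus|].
    + apply (D_comp p0 x); [exact Hx'|apply p0_derivable].
    + apply D_mult; [apply (D_comp p1 x); [exact Hx'|apply p1_derivable]|exact Hy'].
    + apply D_exp, (D_comp F x); [exact Hx'|apply F_derivable; auto].
  - unfold G, Qsys, Psys, g, f, p0, dp0. rewrite !q1_standing. field. auto.
Qed.

Lemma solution_is_rotation x y : is_solution Psys Qsys x y ->
  Rabs (x 0) < xmax -> energy (x 0) (y 0) < Gmin ^ 2 ->
  forall t, Rabs (x t) < xmax /\
    G (x t) = rot_u (G (x 0)) (V (x 0) (y 0)) t /\
    V (x t) (y t) = rot_v (G (x 0)) (V (x 0) (y 0)) t.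
Proof.
  intros Hs H0 HE. pose proof xmax_lt_c. pose proof Gmin_pos.
  assert (Henergy : forall t, Rabs (x t) < c ->
             derivable_pt_lim (fun t => energy (x t) (y t)) t 0).
  { intros t Ht. unfold energy. eapply D_eq.
    - apply D_plus; apply D_pow;
        [apply (G_along_solution x y t Hs Ht)|apply (V_along_solution x y t Hs Ht)].
    - simpl. ring. }
  assert (Hin : forall t, Rabs (x t) < xmax).
  { apply (trapped_by_first_integral x (fun t => energy (x t) (y t)) xmax); auto.
    - intro t. exact (D_cont _ _ _ (proj1 (Hs t))).
    - intros t Ht. exact (D_cont _ _ _ (Henergy t ltac:(lra))).
    - intros t Ht. apply Henergy. lra.
    - intros t Ht Heq. apply interior_of_small_energy with (y t); auto. rewrite Heq. auto. }
  set (u0 := G (x 0)). set (v0 := V (x 0) (y 0)).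
  (* the distance to the rotation is conserved, and vanishes at time 0 *)
  set (D := fun t => (G (x t) - rot_u u0 v0 t) ^ 2 + (V (x t) (y t) - rot_v u0 v0 t) ^ 2).
  assert (HD : forall t, D t = D 0).
  { apply null_derivative_global. intro t. specialize (Hin t). unfold D. eapply D_eq.
    - apply D_plus; apply D_pow; apply D_minus.
      + apply (G_along_solution x y t Hs). lra.
      + apply rot_u_derivable.
      + apply (V_along_solution x y t Hs). lra.
      + apply rot_v_derivable.
    - simpl. ring. }
  assert (HD0 : D 0 = 0).
  { unfold D. destruct (rot_0 u0 v0) as [-> ->]. unfold u0, v0. ring. }
  intro t. specialize (HD t). rewrite HD0 in HD. unfold D in HD. cbv beta in HD.
  destruct (pow2_sum_eq_0 _ _ HD). split; [auto|split; lra].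
Qed.

Definition Ginv (u : R) := epsilon (inhabits 0) (fun z => -xmax <= z <= xmax /\ G z = u).

Lemma Ginv_spec u : G (- xmax) <= u <= G xmax -> -xmax <= Ginv u <= xmax /\ G (Ginv u) = u.
Proof.
  intros Hu. pose proof xmax_pos. pose proof xmax_lt_c.
  unfold Ginv. apply epsilon_spec.
  destruct Hu as [[Hu1|Hu1] [Hu2|Hu2]].
  - assert (Hcont : forall a, -xmax <= a <= xmax -> continuity_pt (fun z => G z - u) a).
    { intros a Ha. apply C_minus; [apply G_continuous, Rabs_def1; lra|apply C_const]. }
    destruct (IVT_interv (fun z => G z - u) (-xmax) xmax Hcont ltac:(lra) ltac:(lra) ltac:(lra))
      as [z [Hz1 Hz2]].
    exists z. split; auto. lra.
  - exists xmax. split; auto; lra.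
  - exists (- xmax). split; auto; lra.
  - exists xmax. split; auto; lra.
Qed.

Lemma G_le a b : -c < a -> a <= b -> b < c -> G a <= G b.
Proof. intros Ha [Hab|<-] Hb; [left; apply G_increasing|right]; auto. Qed.

Lemma Ginv_G a : Rabs a <= xmax -> Ginv (G a) = a.
Proof.
  intros Ha. pose proof xmax_pos. pose proof xmax_lt_c. pose proof (Rabs_between a) as Hba.
  destruct (Ginv_spec (G a)) as [Hr HG]; [split; apply G_le; lra|].
  apply G_injective; auto; apply Rabs_def1; lra.
Qed.

Lemma Ginv_derivable u : G (- xmax) < u < G xmax ->
  derivable_pt_lim Ginv u (/ exp (F (Ginv u))).
Proof.
  intros Hu. pose proof xmax_pos. pose proof xmax_lt_c.
  assert (Hm : Ginv (G (- xmax)) = - xmax) by (apply Ginv_G; rewrite Rabs_Ropp, Rabs_right; lra).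
  assert (Hp : Ginv (G xmax) = xmax) by (apply Ginv_G; rewrite Rabs_right; lra).
  assert (HGd : forall a, -xmax <= a <= xmax -> derivable_pt_lim G a (exp (F a)))
    by (intros a Ha; apply G_derivable, Rabs_def1; lra).
  assert (Prf : forall a, Ginv (G (- xmax)) <= a <= Ginv (G xmax) -> derivable_pt G a).
  { intros a Ha. rewrite Hm, Hp in Ha. exists (exp (F a)). apply HGd; auto. }
  assert (Hcomp : forall z, G (- xmax) <= z -> z <= G xmax -> comp G Ginv z = id z)
    by (intros z H1 H2; apply Ginv_spec; auto).
  assert (Prg : continuity_pt Ginv u).
  { apply (continuity_pt_recip_interv G Ginv (- xmax) xmax); try lra; auto.
    - intros; apply G_increasing; lra.
    - intros z H1 H2. apply Ginv_spec; auto.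
    - intros a Ha. exact (D_cont _ _ _ (HGd a Ha)). }
  assert (Hsp := Ginv_spec u ltac:(lra)).
  assert (Hrange : Ginv (G (- xmax)) <= Ginv u <= Ginv (G xmax)) by (rewrite Hm, Hp; lra).
  assert (Hd := HGd (Ginv u) ltac:(lra)).
  assert (Hne : derive_pt G (Ginv u) (Prf (Ginv u) Hrange) <> 0).
  { rewrite (derive_pt_eq_0 _ _ _ _ Hd). apply Rgt_not_eq, exp_pos. }
  pose proof (derivable_pt_lim_recip_interv G Ginv (G (- xmax)) (G xmax) u Prf Prg
                ltac:(lra) Hu Hrange ltac:(intros; apply Hcomp; lra) Hne) as Hinv.
  rewrite (derive_pt_eq_0 _ _ _ _ Hd) in Hinv. unfold Rdiv in Hinv. rewrite Rmult_1_l in Hinv.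
  exact Hinv.
Qed.

Lemma solution_exists x0 y0 : Rabs x0 < xmax -> energy x0 y0 < Gmin ^ 2 ->
  exists x y, is_solution Psys Qsys x y /\ x 0 = x0 /\ y 0 = y0.
Proof.
  intros Hx0 HE. pose proof xmax_pos as Hh. pose proof xmax_lt_c as Hhc.
  pose proof Gmin_pos as Hm. pose proof Gmin_le as Hml.
  set (u0 := G x0). set (v0 := V x0 y0).
  assert (HU : forall t, Rabs (rot_u u0 v0 t) < Gmin).
  { intro t. apply Rabs_lt_of_pow2; [lra|]. pose proof (rot_norm u0 v0 t).
    pose proof (pow2_ge_0 (rot_v u0 v0 t)). unfold energy in HE. fold u0 v0 in HE. lra. }
  assert (Hrot : forall t, G (- xmax) < rot_u u0 v0 t < G xmax).
  { intro t. specialize (HU t). apply Rabs_def2 in HU. lra. }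
  (* invert [u = G x], [v = V x y] along the rotation *)
  set (x := fun t => Ginv (rot_u u0 v0 t)).
  assert (Hx : forall t, Rabs (x t) < xmax /\ G (x t) = rot_u u0 v0 t).
  { intro t. destruct (Ginv_spec (rot_u u0 v0 t)) as [H1 H2]; [specialize (Hrot t); lra|].
    unfold x. split; auto. apply interior_of_small_G; [apply Rabs_le; lra|].
    rewrite H2. auto. }
  set (y := fun t => (rot_v u0 v0 t * exp (- F (x t)) - p0 (x t)) / p1 (x t)).
  assert (Hxd : forall t, derivable_pt_lim x t (/ exp (F (x t)) * rot_v u0 v0 t)).
  { intro t. apply (D_comp Ginv (rot_u u0 v0));
      [apply rot_u_derivable|apply Ginv_derivable; auto]. }
  assert (Hx0' : x 0 = x0).
  { unfold x. rewrite (proj1 (rot_0 u0 v0)). apply Ginv_G. lra. }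
  exists x, y. split; [|split; auto].
  - intro t. destruct (Hx t) as [Hx1 Hx2].
    assert (Hp : p1 (x t) <> 0) by (apply p1_nonzero; lra).
    pose proof (exp_pos (F (x t))).
    split.
    + eapply D_eq; [apply Hxd|]. unfold Psys, y. rewrite exp_Ropp. field. lra.
    + eapply D_eq.
      * apply D_div; auto. apply D_minus; [apply D_mult; [apply rot_v_derivable|]|].
        -- apply D_exp, D_opp, (D_comp F x); [apply Hxd|apply F_derivable; lra].
        -- apply (D_comp p0 x); [apply Hxd|apply p0_derivable].
        -- apply (D_comp p1 x); [apply Hxd|apply p1_derivable].
      * rewrite <- Hx2. unfold y, Qsys, G, g, f, p0, dp0. rewrite !q1_standing, exp_Ropp.
        unfold Rsqr. field. lra.
  - unfold y. rewrite Hx0', (proj2 (rot_0 u0 v0)). unfold v0, V, Psys.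
    assert (Hp : p1 x0 <> 0) by (apply p1_nonzero; lra).
    pose proof (exp_pos (F x0)). rewrite exp_Ropp. field. lra.
Qed.

Lemma linearization_injective a b a' b' : Rabs a < c -> Rabs a' < c ->
  G a = G a' -> V a b = V a' b' -> a = a' /\ b = b'.
Proof.
  intros Ha Ha' HG HV. assert (a = a') by (apply G_injective; auto). subst a'.
  split; auto. apply (V_injective a); [lra|auto].
Qed.

Lemma energy_0_0 : energy 0 0 = 0.
Proof. unfold energy, V, Psys, p0. rewrite G_0, F_0. ring. Qed.

Lemma energy_on_axis z : energy 0 z = (p1 0 * z) ^ 2.
Proof. unfold energy, V, Psys, p0. rewrite G_0, F_0, exp_0. ring. Qed.

Section Orbit.

Variables x y : R -> R.
Hypothesis x_y_solution : is_solution Psys Qsys x y.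
Hypothesis x_0_small : Rabs (x 0) < xmax.
Hypothesis energy_0_small : energy (x 0) (y 0) < Gmin ^ 2.
Hypothesis not_at_origin : ~ (x 0 = 0 /\ y 0 = 0).

Let u0 := G (x 0).
Let v0 := V (x 0) (y 0).
Let E0 := energy (x 0) (y 0).

Lemma orbit_as_rotation t : Rabs (x t) < xmax /\
  G (x t) = rot_u u0 v0 t /\ V (x t) (y t) = rot_v u0 v0 t.
Proof. exact (solution_is_rotation x y x_y_solution x_0_small energy_0_small t). Qed.

Lemma orbit_energy t : energy (x t) (y t) = E0.
Proof.
  destruct (orbit_as_rotation t) as [_ [HG HV]].
  unfold energy at 1. rewrite HG, HV, rot_norm. reflexivity.
Qed.

Lemma E0_pos : 0 < E0.
Proof. apply energy_pos; auto. pose proof xmax_lt_c. lra. Qed.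

Lemma level_set_on_orbit a b : Rabs a < xmax -> energy a b = E0 ->
  exists t, x t = a /\ y t = b.
Proof.
  intros Ha Hab. pose proof xmax_lt_c.
  destruct (rot_onto_circle u0 v0 (G a) (V a b)) as [t [Hu Hv]]; [exact Hab|].
  exists t. destruct (orbit_as_rotation t) as [Hxt [HG HV]].
  apply linearization_injective; [lra|lra|congruence|congruence].
Qed.

Lemma orbit_closed : closed_orbit_of_period x y (2 * PI).
Proof.
  pose proof PI_RGT_0. pose proof xmax_lt_c. split; [lra|split].
  - intro t. destruct (orbit_as_rotation t) as [A1 [A2 A3]].
    destruct (orbit_as_rotation (t + 2 * PI)) as [B1 [B2 B3]].
    destruct (rot_periodic u0 v0 t) as [P1 P2].
    apply linearization_injective; [lra|lra|congruence|congruence].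
  - intros s Hs [Hxs Hys]. destruct (orbit_as_rotation s) as [_ [HG HV]].
    rewrite Hxs in HG. rewrite Hxs, Hys in HV.
    destruct (rot_return_trivial u0 v0 s Hs) as [Hu Hv]; auto.
    assert (HE : E0 = u0 ^ 2 + v0 ^ 2) by reflexivity. rewrite Hu, Hv in HE.
    pose proof E0_pos. lra.
Qed.

Lemma region_exit a b : ~ (a = 0 /\ b = 0) -> exists L, 0 <= L /\
  ~ (Rabs ((1 + L) * a) < xmax /\ energy ((1 + L) * a) ((1 + L) * b) < E0).
Proof.
  intros Hab. pose proof xmax_pos. destruct (Req_dec a 0) as [->|Ha].
  - assert (Hb : b <> 0) by tauto.
    assert (Hp : p1 0 <> 0) by (apply p1_nonzero; rewrite Rabs_R0; lra).
    assert (Hk : 0 < Rabs (p1 0) * Rabs b) by (apply Rmult_lt_0_compat; apply Rabs_pos_lt; auto).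
    set (L := (Rabs E0 + 1) / (Rabs (p1 0) * Rabs b)).
    assert (HL : 0 <= L) by (apply Rlt_le, Rdiv_lt_0_compat; [pose proof (Rabs_pos E0)|]; lra).
    exists L. split; auto. intros [_ HE]. rewrite Rmult_0_r, energy_on_axis in HE.
    assert (Hw : Rabs (p1 0 * ((1 + L) * b)) = Rabs (p1 0) * Rabs b + Rabs E0 + 1).
    { rewrite !Rabs_mult, (Rabs_right (1 + L)) by lra. unfold L. field.
      split; apply Rabs_no_R0; auto. }
    rewrite <- pow2_abs, Hw in HE. pose proof (Rabs_pos E0). pose proof (RRle_abs E0). nra.
  - assert (Hk : 0 < Rabs a) by (apply Rabs_pos_lt; auto).
    exists (xmax / Rabs a). split; [apply Rlt_le, Rdiv_lt_0_compat; lra|].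
    intros [HA _]. rewrite Rabs_mult, (Rabs_right (1 + _)) in HA.
    + replace ((1 + xmax / Rabs a) * Rabs a) with (Rabs a + xmax) in HA by (field; lra). lra.
    + apply Rle_ge. pose proof (Rdiv_lt_0_compat xmax (Rabs a) ltac:(lra) Hk). lra.
Qed.

Lemma path_meets_orbit (a b : R -> R) : continuity a -> continuity b ->
  Rabs (a 0) < xmax -> energy (a 0) (b 0) < E0 ->
  ~ (Rabs (a 1) < xmax /\ energy (a 1) (b 1) < E0) ->
  exists s t, 0 <= s <= 1 /\ a s = x t /\ b s = y t.
Proof.
  intros Ha Hb Ha0 Hb0 H1. pose proof xmax_lt_c.
  destruct (path_exit a (fun s => energy (a s) (b s)) xmax E0 Ha) as [s [Hs1 [Hs2 Hs3]]]; auto.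
  - intros s Hs. apply energy_continuous; auto. lra.
  - intros s Hs Hes. apply interior_of_small_energy with (b s); auto.
    unfold E0 in Hes. lra.
  - destruct (level_set_on_orbit (a s) (b s) Hs2 Hs3) as [t [T1 T2]].
    exists s, t. auto.
Qed.

Lemma orbit_surrounds_origin : surrounds_origin x y.
Proof.
  pose proof E0_pos. pose proof xmax_pos. split.
  - intros t [Z1 Z2]. pose proof (orbit_energy t). rewrite Z1, Z2, energy_0_0 in H1. lra.
  - intros c1 c2 Hc1 Hc2 H10 H20 Hfar.
    destruct (classic (Rabs (c1 1) < xmax /\ energy (c1 1) (c2 1) < E0)) as [Hin|Hout].
    + exfalso.
      assert (Hc : ~ (c1 1 = 0 /\ c2 1 = 0)).
      { intros [Z1 Z2]. specialize (Hfar 0). rewrite Z1, Z2 in Hfar.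
        pose proof (pow2_ge_0 (x 0)). pose proof (pow2_ge_0 (y 0)). lra. }
      destruct (region_exit (c1 1) (c2 1) Hc) as [L [HL0 HL1]].
      (* follow the ray from [c 1] outwards until it leaves the region *)
      assert (Hray : forall k, continuity (fun l => (1 + L * l) * k)).
      { intros k l. apply C_mult; [apply C_plus; [apply C_const|apply C_mult]|];
          auto using C_const, C_id. }
      destruct (path_meets_orbit (fun l => (1 + L * l) * c1 1) (fun l => (1 + L * l) * c2 1)
                  (Hray _) (Hray _)) as [s [t [Hs0 [T1 T2]]]];
        rewrite ?Rmult_0_r, ?Rmult_1_r, ?Rplus_0_r, ?Rmult_1_l; try tauto.
      specialize (Hfar t). rewrite <- T1, <- T2 in Hfar.
      assert (1 <= 1 + L * s) by nra.
      pose proof (pow2_ge_0 (c1 1)). pose proof (pow2_ge_0 (c2 1)). nra.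
    + apply (path_meets_orbit c1 c2); auto.
      * rewrite H10, Rabs_R0. lra.
      * rewrite H10, H20, energy_0_0. lra.
Qed.

End Orbit.

Lemma isochronous : isochronous_center Psys Qsys.
Proof.
  destruct small_disk as [r [Hr Hdisk]].
  exists r, (2 * PI). split; [auto|split; [pose proof PI_RGT_0; lra|]].
  intros x0 y0 [Hpos Hlt]. destruct (Hdisk x0 y0 Hlt) as [Hx0 HE].
  split; [apply solution_exists; auto|].
  intros x y Hs Hx Hy. subst x0 y0.
  assert (Hne : ~ (x 0 = 0 /\ y 0 = 0)) by (intros [Z1 Z2]; rewrite Z1, Z2 in Hpos; lra).
  split; [apply orbit_closed|apply orbit_surrounds_origin]; auto.
Qed.

Definition g_urabe x := - q2 x * p0 x ^ 2 / p1 x + q1 x * p0 x - p1 x * q0 x.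

Lemma g_urabe_g x : p1 x <> 0 -> g_urabe x = g x.
Proof. intros. unfold g_urabe, g, p0. rewrite q1_standing. field. auto. Qed.

Lemma g_urabe_continuous x : Rabs x <= c -> continuity_pt g_urabe x.
Proof.
  intros Hx. pose proof (fun z => D_cont _ _ _ (p1_derivable z)) as Hp1.
  pose proof (fun z => D_cont _ _ _ (p0_derivable z)) as Hp0.
  pose proof (fun z => D_cont _ _ _ (q0_derivable z)) as Hq0.
  pose proof (fun z => D_cont _ _ _ (q1_derivable z)) as Hq1.
  pose proof (fun z => D_cont _ _ _ (q2_derivable z)) as Hq2.
  unfold g_urabe. apply C_minus; [apply C_plus|apply C_mult; auto].
  - apply C_div; auto. apply C_mult; [apply C_opp|apply C_pow]; auto.
  - apply C_mult; auto.
Qed.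

Lemma zero_urabe : zero_urabe_function Psys Qsys.
Proof.
  pose proof xmax_pos as Hh. pose proof xmax_lt_c as Hhc.
  exists p0, p1, q0, q1, q2, dp0, dp1.
  split; [reflexivity|]. split; [reflexivity|]. split; [unfold p0; ring|]. split; [auto|].
  split; [apply p1_nonzero; rewrite Rabs_R0; lra|].
  split; [apply p0_derivable|]. split; [auto|].
  split; [intros x Hx; unfold p0, dp0; rewrite q1_standing; field; auto|].
  change (exists delta, 0 < delta /\ forall x, Rabs x < delta ->
    (x <> 0 -> 0 < x * (g_urabe x * exp (F x))) /\
    / 2 * (g_urabe x * exp (F x)) ^ 2 = Rint (fun s => g_urabe s * exp (2 * F s)) 0 x).
  exists xmax. split; auto. intros x Hx.
  rewrite g_urabe_g by (apply p1_nonzero; lra). fold (G x).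
  split; [intros; apply G_sign; auto; lra|].
  (* both sides vanish at 0 and have the same derivative [g e^(2F) = G G'] *)
  set (K := fun z => Rint (fun s => g_urabe s * exp (2 * F s)) 0 z - / 2 * G z ^ 2).
  assert (HK' : forall z, -xmax < z < xmax -> derivable_pt_lim K z 0).
  { intros z Hz. assert (Hzc : Rabs z < c) by (apply Rabs_def1; lra).
    unfold K. eapply D_eq.
    - apply D_minus; [apply (derivable_pt_lim_Rint _ xmax z Hh); [|lra]|].
      + intros w Hw. assert (Hwc : Rabs w < c) by (apply Rabs_def1; lra).
        apply C_mult; [apply g_urabe_continuous; lra|].
        exact (D_cont _ _ _ (D_exp _ _ _ (D_mult _ _ _ _ _ (D_const 2 w) (F_derivable w Hwc)))).
      + apply D_mult; [apply D_const|apply D_pow, G_derivable; auto].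
    - rewrite g_urabe_g by (apply p1_nonzero; lra). unfold G.
      replace (2 * F z) with (F z + F z) by ring. rewrite exp_plus. simpl. field. }
  assert (HK0 : K 0 = 0) by (unfold K; rewrite Rint_0, G_0; ring).
  assert (HKx : K x = K (- Rabs x) /\ K 0 = K (- Rabs x)).
  { pose proof (Rabs_between x). pose proof (Rabs_pos x).
    split; apply (null_derivative_interval K (- Rabs x) (Rabs x)); try lra;
      intros t Ht; apply HK'; lra. }
  unfold K in HKx, HK0. lra.
Qed.

End LinearizableSystem.

Theorem linearizable_isochronous_zero_urabe (p1 dp1 q0 q1 q2 dq0 dq1 dq2 : R -> R) :
  (forall x, derivable_pt_lim p1 x (dp1 x)) ->
  (forall x, derivable_pt_lim q0 x (dq0 x)) ->
  (forall x, derivable_pt_lim q1 x (dq1 x)) ->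
  (forall x, derivable_pt_lim q2 x (dq2 x)) ->
  (forall x, continuity_pt dp1 x) ->
  q0 0 = 0 -> p1 0 <> 0 ->
  (forall x, q1 x = 2 * x * p1 x - 2 * x ^ 2 * q2 x) ->
  (forall x, dg p1 dp1 q0 q1 q2 dq0 dq1 dq2 x * p1 x - (q2 x + dp1 x) * g p1 q0 q1 q2 x = p1 x) ->
  isochronous_zero_urabe (Psys p1) (Qsys q0 q1 q2).
Proof.
  intros Hp1 Hq0 Hq1 Hq2 Hdp1 Hq00 Hp10 Hst Hur.
  assert (Hp : 0 < Rabs (p1 0)) by (apply Rabs_pos_lt; auto).
  destruct (continuity_pt_eps p1 0 (D_cont _ _ _ (Hp1 0)) (Rabs (p1 0) / 2)) as [d [Hd Hnear]];
    [lra|].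
  assert (Hc : forall x, Rabs x <= d / 2 -> p1 x <> 0).
  { intros x Hx Hz. specialize (Hnear x ltac:(rewrite Rminus_0_r; lra)).
    rewrite Hz, Rminus_0_l, Rabs_Ropp in Hnear. lra. }
  split.
  - apply (isochronous p1 dp1 q0 q1 q2 dq0 dq1 dq2 Hp1 Hq0 Hq1 Hq2 Hdp1 Hq00 Hst Hur (d / 2));
      auto; lra.
  - apply (zero_urabe p1 dp1 q0 q1 q2 dq0 dq1 dq2 Hp1 Hq0 Hq1 Hq2 Hdp1 Hq00 Hst Hur (d / 2));
      auto; lra.
Qed.

(* Polynomials as coefficient lists, constant coefficient first. *)
Fixpoint poly_eval (l : list R) (x : R) : R :=
  match l with nil => 0 | a :: l' => a + x * poly_eval l' x end.

Fixpoint poly_add (l1 l2 : list R) : list R :=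
  match l1, l2 with
  | nil, _ => l2
  | _, nil => l1
  | a :: l1', b :: l2' => (a + b) :: poly_add l1' l2'
  end.

Fixpoint poly_deriv (l : list R) : list R :=
  match l with nil => nil | a :: l' => poly_add l' (0 :: poly_deriv l') end.

Lemma poly_eval_add l1 l2 x : poly_eval (poly_add l1 l2) x = poly_eval l1 x + poly_eval l2 x.
Proof.
  revert l2; induction l1 as [|a l1 IH]; intros [|b l2]; simpl; try ring.
  rewrite IH. ring.
Qed.

Lemma poly_eval_derivable l x : derivable_pt_lim (poly_eval l) x (poly_eval (poly_deriv l) x).
Proof.
  induction l as [|a l IH].
  - apply (D_const 0).
  - change (poly_eval (a :: l)) with (fun t => a + t * poly_eval l t). eapply D_eq.
    + apply D_plus; [apply D_const|apply D_mult; [apply derivable_pt_lim_id|apply IH]].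
    + simpl. rewrite poly_eval_add. simpl. ring.
Qed.

Definition urabe_identity (cp1 cq0 cq1 cq2 : list R) : Prop :=
  let p1 := poly_eval cp1 in let dp1 := poly_eval (poly_deriv cp1) in
  let q0 := poly_eval cq0 in let q1 := poly_eval cq1 in let q2 := poly_eval cq2 in
  forall x, dg p1 dp1 q0 q1 q2 (poly_eval (poly_deriv cq0)) (poly_eval (poly_deriv cq1))
              (poly_eval (poly_deriv cq2)) x * p1 x - (q2 x + dp1 x) * g p1 q0 q1 q2 x = p1 x.

Lemma polynomial_isochronous_zero_urabe (P Q : R -> R -> R) (cp1 cq0 cq1 cq2 : list R) :
  (forall x y, P x y = - x ^ 2 * poly_eval cp1 x + poly_eval cp1 x * y) ->
  (forall x y, Q x y = poly_eval cq0 x + poly_eval cq1 x * y + poly_eval cq2 x * y ^ 2) ->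
  poly_eval cq0 0 = 0 -> poly_eval cp1 0 <> 0 ->
  (forall x, poly_eval cq1 x = 2 * x * poly_eval cp1 x - 2 * x ^ 2 * poly_eval cq2 x) ->
  urabe_identity cp1 cq0 cq1 cq2 ->
  isochronous_zero_urabe P Q.
Proof.
  intros HP HQ Hq0 Hp1 Hst Hur.
  replace P with (Psys (poly_eval cp1))
    by (do 2 (apply functional_extensionality; intro); rewrite HP; reflexivity).
  replace Q with (Qsys (poly_eval cq0) (poly_eval cq1) (poly_eval cq2))
    by (do 2 (apply functional_extensionality; intro); rewrite HQ; reflexivity).
  apply (linearizable_isochronous_zero_urabe _ (poly_eval (poly_deriv cp1)) _ _ _
           (poly_eval (poly_deriv cq0)) (poly_eval (poly_deriv cq1)) (poly_eval (poly_deriv cq2)));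
    auto using poly_eval_derivable.
  intro x. exact (D_cont _ _ _ (poly_eval_derivable _ x)).
Qed.

Lemma case_i_urabe_identity s r a1 h : s * s = 1 -> r * r = 19 -> a1 * a1 = -106 + 34 * r ->
  2 * h = 1 ->
  urabe_identity [-1; 0; -2 + 2 * r] [0; 1; - (s * (a1 * h)); -13 + 3 * r; s * 4 * a1]
    [0; -2; - (s * 2 * a1); 16 - 16 * r] [s * a1; -10 + 10 * r].
Proof. intros Hs Hr Ha Hh x. unfold dg, g. simpl. nsatz. Qed.

Lemma case_ii_urabe_identity a :
  urabe_identity [-1; a; 15 / 8 * a ^ 2] [0; 1; 3 * a / 4; 2; - (5 * a / 2)]
    [0; -2; 3 * a; - (15 / 4 * a ^ 2)] [- (a / 2); 15 / 4 * a ^ 2].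
Proof. intros x. unfold dg, g. simpl. field. Qed.

Lemma case_iii_urabe_identity s r a5 h k : s * s = 1 -> r * r = 4691 ->
  a5 * a5 = -77798 + 1162 * r -> 2 * h = 1 -> 35 * k = 1 ->
  urabe_identity [-1; - (s * (2 * k) * a5); (-2478 + 42 * r) * k]
    [0; 1; - (s * (3 * h * k) * a5); (-2183 + 27 * r) * k; s * (38 * k) * a5]
    [0; -2; - (s * (6 * k) * a5); - (8 * ((-2478 + 42 * r) * k))]
    [s * (a5 * k); 5 * ((-2478 + 42 * r) * k)].
Proof. intros Hs Hr Ha Hh Hk x. unfold dg, g. simpl. nsatz. Qed.

Lemma case_i s r a1 : s * s = 1 -> r * r = 19 -> a1 * a1 = -106 + 34 * r ->
  isochronous_zero_urabe
    (fun x y => - y + (-2 + 2 * r) * x ^ 2 * y + x ^ 2 - (-2 + 2 * r) * x ^ 4)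
    (fun x y => x + s * a1 * y ^ 2 - 2 * x * y - s * (a1 / 2) * x ^ 2
                + (-10 + 10 * r) * x * y ^ 2 - s * 2 * a1 * x ^ 2 * y + (-13 + 3 * r) * x ^ 3
                + (16 - 16 * r) * x ^ 3 * y + s * 4 * a1 * x ^ 4).
Proof.
  intros Hs Hr Ha.
  apply (polynomial_isochronous_zero_urabe _ _ [-1; 0; -2 + 2 * r]
           [0; 1; - (s * (a1 * / 2)); -13 + 3 * r; s * 4 * a1]
           [0; -2; - (s * 2 * a1); 16 - 16 * r] [s * a1; -10 + 10 * r]);
    try (intros; simpl; unfold Rdiv; ring); [simpl; lra|].
  apply case_i_urabe_identity; auto. field.
Qed.

Lemma case_ii a :
  isochronous_zero_urabe
    (fun x y => - y + a * x * y + 15 / 8 * a ^ 2 * x ^ 2 * y + x ^ 2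
                - a * x ^ 3 - 15 / 8 * a ^ 2 * x ^ 4)
    (fun x y => x - a / 2 * y ^ 2 - 2 * x * y + 3 * a / 4 * x ^ 2
                + 15 / 4 * a ^ 2 * x * y ^ 2 + 3 * a * x ^ 2 * y + 2 * x ^ 3
                - 15 / 4 * a ^ 2 * x ^ 3 * y - 5 * a / 2 * x ^ 4).
Proof.
  apply (polynomial_isochronous_zero_urabe _ _ [-1; a; 15 / 8 * a ^ 2]
           [0; 1; 3 * a / 4; 2; - (5 * a / 2)] [0; -2; 3 * a; - (15 / 4 * a ^ 2)]
           [- (a / 2); 15 / 4 * a ^ 2]);
    try (intros; simpl; field); [simpl; lra|].
  apply case_ii_urabe_identity.
Qed.

Lemma case_iii s r a5 : s * s = 1 -> r * r = 4691 -> a5 * a5 = -77798 + 1162 * r ->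
  isochronous_zero_urabe
    (fun x y => - y - s * (2 / 35) * a5 * x * y + (- (354 / 5) + 6 * r / 5) * x ^ 2 * y + x ^ 2
                + s * (2 / 35) * a5 * x ^ 3 - (- (354 / 5) + 6 * r / 5) * x ^ 4)
    (fun x y => x + s * (a5 / 35) * y ^ 2 - 2 * x * y - s * (3 / 70) * a5 * x ^ 2
                + 5 * (- (354 / 5) + 6 * r / 5) * x * y ^ 2 - s * (6 / 35) * a5 * x ^ 2 * y
                + (- (2183 / 35) + 27 / 35 * r) * x ^ 3
                - 8 * (- (354 / 5) + 6 * r / 5) * x ^ 3 * y + s * (38 / 35) * a5 * x ^ 4).
Proof.
  intros Hs Hr Ha.
  apply (polynomial_isochronous_zero_urabe _ _
           [-1; - (s * (2 * / 35) * a5); (-2478 + 42 * r) * / 35]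
           [0; 1; - (s * (3 * / 2 * / 35) * a5); (-2183 + 27 * r) * / 35; s * (38 * / 35) * a5]
           [0; -2; - (s * (6 * / 35) * a5); - (8 * ((-2478 + 42 * r) * / 35))]
           [s * (a5 * / 35); 5 * ((-2478 + 42 * r) * / 35)]);
    try (intros; simpl; field); [simpl; lra|].
  apply case_iii_urabe_identity; auto; field.
Qed.

Theorem theorem4p2 :
  let a1 := sqrt (-106 + 34 * sqrt 19) in
  let a2 := -10 + 10 * sqrt 19 in
  let a3 := 16 - 16 * sqrt 19 in
  let a4 := -13 + 3 * sqrt 19 in
  let a5 := sqrt (-77798 + 1162 * sqrt 4691) in
  let a6 := - (354 / 5) + 6 * sqrt 4691 / 5 in
  let a7 := - (2183 / 35) + 27 / 35 * sqrt 4691 in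
  (* (i), s = 1 : upper signs, s = -1 : lower signs *)
  (forall s : R, s = 1 \/ s = -1 ->
     isochronous_zero_urabe
       (fun x y => - y + (-2 + 2 * sqrt 19) * x ^ 2 * y + x ^ 2
                   - (-2 + 2 * sqrt 19) * x ^ 4)
       (fun x y => x + s * a1 * y ^ 2 - 2 * x * y - s * (a1 / 2) * x ^ 2
                   + a2 * x * y ^ 2 - s * 2 * a1 * x ^ 2 * y + a4 * x ^ 3
                   + a3 * x ^ 3 * y + s * 4 * a1 * x ^ 4)) /\
  (* (ii) *)
  (forall a : R,
     isochronous_zero_urabe
       (fun x y => - y + a * x * y + 15 / 8 * a ^ 2 * x ^ 2 * y + x ^ 2
                   - a * x ^ 3 - 15 / 8 * a ^ 2 * x ^ 4)
       (fun x y => x - a / 2 * y ^ 2 - 2 * x * y + 3 * a / 4 * x ^ 2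
                   + 15 / 4 * a ^ 2 * x * y ^ 2 + 3 * a * x ^ 2 * y + 2 * x ^ 3
                   - 15 / 4 * a ^ 2 * x ^ 3 * y - 5 * a / 2 * x ^ 4)) /\
  (* (iii), s = 1 : upper signs, s = -1 : lower signs *)
  (forall s : R, s = 1 \/ s = -1 ->
     isochronous_zero_urabe
       (fun x y => - y - s * (2 / 35) * a5 * x * y + a6 * x ^ 2 * y + x ^ 2
                   + s * (2 / 35) * a5 * x ^ 3 - a6 * x ^ 4)
       (fun x y => x + s * (a5 / 35) * y ^ 2 - 2 * x * y - s * (3 / 70) * a5 * x ^ 2
                   + 5 * a6 * x * y ^ 2 - s * (6 / 35) * a5 * x ^ 2 * y + a7 * x ^ 3
                   - 8 * a6 * x ^ 3 * y + s * (38 / 35) * a5 * x ^ 4)).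
Proof.
  intros a1 a2 a3 a4 a5 a6 a7.
  assert (Hsign : forall s : R, s = 1 \/ s = -1 -> s * s = 1) by (intros s [-> | ->]; ring).
  assert (H19 : sqrt 19 * sqrt 19 = 19) by (apply sqrt_sqrt; lra).
  assert (H4691 : sqrt 4691 * sqrt 4691 = 4691) by (apply sqrt_sqrt; lra).
  pose proof (sqrt_pos 19). pose proof (sqrt_pos 4691).
  assert (Ha1 : a1 * a1 = -106 + 34 * sqrt 19) by (apply sqrt_sqrt; nra).
  assert (Ha5 : a5 * a5 = -77798 + 1162 * sqrt 4691) by (apply sqrt_sqrt; nra).
  split; [|split].
  - intros s Hs. exact (case_i s (sqrt 19) a1 (Hsign s Hs) H19 Ha1).
  - exact case_ii.
  - intros s Hs. exact (case_iii s (sqrt 4691) a5 (Hsign s Hs) H4691 Ha5).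
Qed.
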